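(* Let $n=p^{\alpha}qr$ where $p,q,r$ are distinct primes and $\alpha\geq 1$ is an integer. Then $\mathbb{AG}(\mathbb{Z}_n)$ has no induced cycle of odd length greater than $3$.
   Context: For a commutative ring $R$ with unity, the annihilating-ideal graph $\mathbb{AG}(R)$ is the simple graph whose vertex set is the set of all non-zero ideals of $R$ with non-zero annihilator, two distinct vertices $I,J$ being adjacent if and only if $IJ=0$. An induced cycle is a cycle in the graph with no chords, i.e. an induced subgraph isomorphic to a cycle. *)

From mathcomp Require Import all_boot all_algebra.
Set Implicit Arguments. Unset Strict Implicit. Unset Printing Implicit Defensive.
Import GRing.Theory.
Local Open Scope ring_scope.

Section AnnihilatingIdealGraph.
Variable R : finComNzRingType.

Definition is_ideal (I : {set R}) : bool :=
  [&& (0 : R) \in I,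
      [forall x in I, forall y in I, x - y \in I] &
      [forall r : R, forall x in I, r * x \in I]].

Definition ann (I : {set R}) : {set R} := [set x | [forall a in I, x * a == 0]].

Definition AG_vertex (I : {set R}) : bool :=
  [&& is_ideal I, I != [set 0] & ann I != [set 0]].

(* product ideal IJ is zero iff all products a*b (a in I, b in J) vanish;
   distinct vertices are adjacent iff IJ = 0 *)
Definition AG_adj (I J : {set R}) : bool :=
  (I != J) && [forall a in I, forall b in J, a * b == 0].
End AnnihilatingIdealGraph.

Definition induced_cycle (T : eqType) (V : pred T) (E : rel T) (x0 : T)
    (s : seq T) : Prop :=
  [/\ (3 <= size s)%N, uniq s, all V s &
      forall i j : nat, (i < size s)%N -> (j < size s)%N ->
        E (nth x0 s i) (nth x0 s j) =
        (((i.+1 %% size s) == j) || ((j.+1 %% size s) == i))%N].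

From mathcomp Require Import all_boot all_algebra zify.
Import GRing.Theory.

Set Implicit Arguments.
Unset Strict Implicit.
Unset Printing Implicit Defensive.

(* Every ideal of Z_n is generated by a divisor d of n, and ideals are ordered
   by reverse divisibility of their generators. For n = p^a q r a divisor is
   determined, up to its p-adic valuation, by whether q and r divide it; so
   among five ideals two have generators comparable under divisibility, and
   one ideal contains the other. In an induced cycle of length at least 5 this
   is impossible: if I_i is contained in I_j, both neighbours of I_j are
   annihilated by I_i, hence are I_i or neighbours of I_i. Of the hypotheses on
   p, q, r only q != r matters: it makes every prime other than p divide n at
   most once. *)

Definition cycle_adj (k i j : nat) : bool := (i.+1 %% k == j) || (j.+1 %% k == i).

Lemma succ_modn_eq k a b : a < k -> b < k ->
  (a.+1 %% k == b) = (if a.+1 == k then b == 0 else a.+1 == b).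
Proof.
move=> ak bk; case: (a.+1 =P k) => [->|ne]; first by rewrite modnn eq_sym.
by rewrite modn_small //; lia.
Qed.

Lemma cycle_adj_nbhd_sub k i j : 4 < k -> i < k -> j < k ->
  (forall l, l < k -> cycle_adj k j l -> (l == i) || cycle_adj k i l) -> i = j.
Proof.
move=> k_gt4 ik jk sub.
have jS_lt : (if j.+1 == k then 0 else j.+1) < k by case: ifP; lia.
have jP_lt : (if j == 0 then k.-1 else j.-1) < k by case: ifP; lia.
move: (sub _ jS_lt) (sub _ jP_lt); rewrite /cycle_adj !succ_modn_eq //.
by repeat case: ifP; lia.
Qed.

Lemma induced_cycle_nbhd_sub (T : eqType) (V : pred T) (E : rel T) x0 s i j :
    induced_cycle V E x0 s -> 4 < size s -> i < size s -> j < size s ->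
    (forall y, y \in s -> E (nth x0 s j) y -> (y == nth x0 s i) || E (nth x0 s i) y) ->
  i = j.
Proof.
case=> _ s_uniq _ s_adj s_gt4 ilt jlt sub.
apply: (cycle_adj_nbhd_sub s_gt4) => // l ls.
rewrite /cycle_adj -!s_adj //.
by move/(sub _ (mem_nth x0 ls)); rewrite nth_uniq.
Qed.

Section Ideals.
Variable R : finComNzRingType.
Implicit Types I J K : {set R}.
Local Open Scope ring_scope.

Lemma ideal0 I : is_ideal I -> 0 \in I.
Proof. by case/and3P. Qed.

Lemma idealB I x y : is_ideal I -> x \in I -> y \in I -> x - y \in I.
Proof. by case/and3P=> _ /forall_inP/(_ x) H _ xI /(forall_inP (H xI)). Qed.

Lemma idealMl I c x : is_ideal I -> x \in I -> c * x \in I.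
Proof. by case/and3P=> _ _ /forallP/(_ c)/forall_inP; apply. Qed.

Lemma AG_adj_subset I J K :
  {subset I <= J} -> AG_adj J K -> (K == I) || AG_adj I K.
Proof.
move=> IJ /andP[_ /forall_inP JK]; rewrite /AG_adj eq_sym.
by case: eqVneq => //= _; apply/forall_inP => a /IJ /JK.
Qed.

Lemma induced_cycle_AG_subset (s : seq {set R}) i j :
    induced_cycle (@AG_vertex R) (@AG_adj R) set0 s -> (4 < size s)%N ->
    (i < size s)%N -> (j < size s)%N -> {subset nth set0 s i <= nth set0 s j} ->
  i = j.
Proof.
move=> s_cyc s_gt4 ilt jlt sub; apply: (induced_cycle_nbhd_sub s_cyc) => // y _.
exact: AG_adj_subset.
Qed.
End Ideals.

Section ZpIdeals.
Variable n : nat.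
Hypothesis n_gt1 : (1 < n)%N.
Local Notation Zn := 'Z_n.
Local Open Scope ring_scope.
Implicit Types I J : {set Zn}.

Lemma idealD_gcdn I a b : is_ideal I -> a%:R \in I -> b%:R \in I ->
  (gcdn a b)%:R \in I.
Proof.
move=> I_ideal aI bI; have [->|a_gt0] := posnP a; first by rewrite gcd0n.
case: (egcdnP b a_gt0) => u v Bezout _.
have -> : (gcdn a b)%:R = (u * a)%:R - (v * b)%:R :> Zn.
  by rewrite Bezout addnC natrD addrK.
by rewrite !natrM idealB ?idealMl.
Qed.

Definition Zp_ideal_gen I : nat := gcdn (\big[gcdn/0%N]_(x in I) val x) n.

Lemma Zp_ideal_gen_dvdn I : (Zp_ideal_gen I %| n)%N.
Proof. exact: dvdn_gcdr. Qed.

Lemma Zp_ideal_gen_in I : is_ideal I -> (Zp_ideal_gen I)%:R \in I.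
Proof.
move=> I_ideal; apply: idealD_gcdn; rewrite ?pchar_Zp ?ideal0 //.
elim/big_ind: _ => [|a b|x xI]; rewrite ?natr_Zp ?ideal0 //.
exact: idealD_gcdn.
Qed.

Lemma mem_Zp_ideal I x : is_ideal I -> (x \in I) = (Zp_ideal_gen I %| val x)%N.
Proof.
move=> I_ideal; apply/idP/idP => [xI | /dvdnP[m x_eq]].
  by apply: dvdn_trans (dvdn_gcdl _ _) _; apply/dvdn_biggcdP: xI.
by rewrite -(natr_Zp x) x_eq natrM idealMl ?Zp_ideal_gen_in.
Qed.

Lemma Zp_ideal_subset I J : is_ideal I -> is_ideal J ->
  (Zp_ideal_gen J %| Zp_ideal_gen I)%N -> {subset I <= J}.
Proof. by move=> I_ideal J_ideal JI x; rewrite !mem_Zp_ideal //; apply: dvdn_trans. Qed.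
End ZpIdeals.

Lemma dvdn_from_logn d1 d2 : 0 < d1 -> 0 < d2 ->
  (forall l, prime l -> l %| d1 -> logn l d1 <= logn l d2) -> d1 %| d2.
Proof.
move=> d1_gt0 d2_gt0 le_log; apply/dvdn_partP => // l.
by rewrite mem_primes => /and3P[l_pr _ l_d1]; rewrite p_part pfactor_dvdn // le_log.
Qed.

Lemma dvdn_from_logn_p p n d1 d2 : 0 < n -> d1 %| n -> d2 %| n ->
    (forall l, prime l -> l != p -> logn l n <= 1) ->
    (forall l, prime l -> l != p -> l %| d1 -> l %| d2) ->
  logn p d1 <= logn p d2 -> d1 %| d2.
Proof.
move=> n_gt0 d1n d2n n_p'_sqfree d12_supp le_p.
have [d1_gt0 d2_gt0] := (dvdn_gt0 n_gt0 d1n, dvdn_gt0 n_gt0 d2n).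
apply: dvdn_from_logn => // l l_pr l_d1; have [-> //|l_neq_p] := eqVneq l p.
apply: leq_trans (dvdn_leq_log l n_gt0 d1n) _.
apply: leq_trans (n_p'_sqfree l l_pr l_neq_p) _.
by rewrite logn_gt0 mem_primes l_pr d2_gt0 d12_supp.
Qed.

Lemma uniq_bool_pair_size (s : seq (bool * bool)) : uniq s -> size s <= 4.
Proof.
by move/card_uniqP <-; rewrite (leq_trans (max_card _)) // card_prod card_bool.
Qed.

Section PQR.
Variables p q r a : nat.
Hypotheses (p_pr : prime p) (q_pr : prime q) (r_pr : prime r).
Hypothesis q_neq_r : q != r.
Local Notation n := (p ^ a * q * r).

Lemma pqr_gt1 : 1 < n.
Proof.
rewrite -mulnA mulnCA (leq_trans (prime_gt1 q_pr)) //.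
by rewrite leq_pmulr ?muln_gt0 ?expn_gt0 ?prime_gt0.
Qed.

Lemma logn_pqr_le1 l : prime l -> l != p -> logn l n <= 1.
Proof.
move=> l_pr l_neq_p.
rewrite !lognM ?muln_gt0 ?expn_gt0 ?prime_gt0 // lognX !logn_prime //.
rewrite (negbTE l_neq_p) muln0.
by case: (l =P q) => [->|_]; rewrite ?(negbTE q_neq_r) //; case: (l == r).
Qed.

Lemma prime_dvdn_pqr l : prime l -> l != p -> l %| n -> (l == q) || (l == r).
Proof.
move=> l_pr l_neq_p; rewrite !Euclid_dvdM // Euclid_dvdX // !dvdn_prime2 //.
by rewrite (negbTE l_neq_p) -orbA.
Qed.

Definition pqr_class (I : {set 'Z_n}) : bool * bool :=
  (q %| Zp_ideal_gen I, r %| Zp_ideal_gen I).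

Lemma pqr_class_gen_dvdn I J : pqr_class I = pqr_class J ->
  logn p (Zp_ideal_gen I) <= logn p (Zp_ideal_gen J) ->
  Zp_ideal_gen I %| Zp_ideal_gen J.
Proof.
case=> IJq IJr; have n_gt0 : 0 < n by rewrite ltnW // pqr_gt1.
apply: dvdn_from_logn_p n_gt0 _ _ logn_pqr_le1 _; rewrite ?Zp_ideal_gen_dvdn //.
move=> l l_pr l_neq_p l_I.
have := prime_dvdn_pqr l_pr l_neq_p (dvdn_trans l_I (Zp_ideal_gen_dvdn _)).
by case/orP=> /eqP l_eq; rewrite l_eq in l_I *; rewrite -?IJq -?IJr.
Qed.

Lemma pqr_class_subset I J : is_ideal I -> is_ideal J -> pqr_class I = pqr_class J ->
  {subset I <= J} \/ {subset J <= I}.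
Proof.
move=> I_ideal J_ideal IJ.
have [le|/ltnW le] := leqP (logn p (Zp_ideal_gen I)) (logn p (Zp_ideal_gen J)).
- right; apply: (Zp_ideal_subset pqr_gt1 J_ideal I_ideal).
  exact: pqr_class_gen_dvdn IJ le.
- left; apply: (Zp_ideal_subset pqr_gt1 I_ideal J_ideal).
  exact: pqr_class_gen_dvdn (esym IJ) le.
Qed.
End PQR.

Theorem lemma4 (p q r alpha : nat) :
  prime p -> prime q -> prime r -> p != q -> q != r -> p != r -> (1 <= alpha)%N ->
  forall s : seq {set 'Z_(p ^ alpha * q * r)},
    induced_cycle (@AG_vertex _) (@AG_adj _) set0 s ->
    odd (size s) -> (size s <= 3)%N.
Proof.
move=> p_pr q_pr r_pr _ q_neq_r _ _ s s_cyc s_odd.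
rewrite leqNgt; apply/negP => s_gt3.
have s_gt4 : 4 < size s by move: s_odd s_gt3; case: (size s) => [|[|[|[|[|]]]]].
have : ~~ uniq (map (@pqr_class p q r alpha) s).
  by apply: contraTN s_gt4 => /uniq_bool_pair_size; rewrite size_map -leqNgt.
case/(uniqPn (@pqr_class p q r alpha set0)) => i [j [ij]]; rewrite size_map => jlt.
have ilt := ltn_trans ij jlt.
have [_ _ s_ideals _] := s_cyc.
have ideal_nth k : k < size s -> is_ideal (nth set0 s k).
  by move=> klt; case/and3P: (allP s_ideals _ (mem_nth set0 klt)).
rewrite !(nth_map set0) // => /(pqr_class_subset p_pr q_pr r_pr q_neq_r).
case/(_ (ideal_nth _ ilt) (ideal_nth _ jlt)).
- by move/(induced_cycle_AG_subset s_cyc s_gt4 ilt jlt); lia.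
- by move/(induced_cycle_AG_subset s_cyc s_gt4 jlt ilt); lia.
Qed.
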